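(* Let $\ell:\mathcal{H}\times\mathcal{Z}\times\mathcal{Z}\to[0,B]$ be a $B$-bounded pairwise loss with $\mathcal{R}_s(\ell\circ\mathcal{H})=C_d\cdot O(\sqrt{1/s})$, let $z_1,\dots,z_n$ be a stream, and suppose an online learning algorithm incurs buffer penalties based on a buffer of size $s$ updated with the RS-x algorithm (described below) and generates an ensemble $h_1,\dots,h_{n-1}$. Then with probability at least $1-\delta$ over the random variables used to update the buffer, \[ \mathfrak{R}_n\le\mathfrak{R}^{\mathrm{buf}}_n+C_d\,(n-1)\cdot O\!\left(\sqrt{\frac{\log\frac n\delta}{s}}\right), \] where $\mathfrak{R}_n=\sum_{t=2}^n\hat{\mathcal{L}}_t(h_{t-1})-\inf_{h\in\mathcal{H}}\sum_{t=2}^n\hat{\mathcal{L}}_t(h)$ and $\mathfrak{R}^{\mathrm{buf}}_n=\sum_{t=2}^n\hat{\mathcal{L}}^{\mathrm{buf}}_t(h_{t-1})-\inf_{h\in\mathcal{H}}\sum_{t=2}^n\hat{\mathcal{L}}^{\mathrm{buf}}_t(h)$.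
   Context: All-pairs penalty $\hat{\mathcal{L}}_t(h)=\frac1{t-1}\sum_{\tau=1}^{t-1}\ell(h,z_t,z_\tau)$; buffer penalty $\hat{\mathcal{L}}^{\mathrm{buf}}_t(h)=\frac1{|B_t|}\sum_{z\in B_t}\ell(h,z_t,z)$, with $B_t$ the buffer after processing $z_1,\dots,z_{t-1}$. RS-x update with the point $z_t$ at step $t$: if $|B|<s$, add $z_t$; else if $t=s+1$, replace $B$ by $s$ points sampled uniformly with replacement from $B\cup\{z_t\}$; else independently replace each buffer entry by $z_t$ with probability $1/t$. $\mathcal{R}_s(\ell\circ\mathcal{H})=\mathbb{E}[\sup_h\frac1s\sum_{j=1}^s\epsilon_j\ell(h,z,z_j)]$; $C_d$ is its dependence on the input dimension $d$; $O(\cdot)$ hides constants such as $B$. The infimum over $\mathcal{H}$ of $\sum_t\hat{\mathcal{L}}_t$ is assumed attained. *)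

From HB Require Import structures.
From mathcomp Require Import all_boot all_order all_algebra.
From mathcomp Require Import boolp classical_sets reals exp.
Set Implicit Arguments. Unset Strict Implicit. Unset Printing Implicit Defensive.
Import Order.TTheory GRing.Theory Num.Theory.
Local Open Scope ring_scope.
Local Open Scope classical_set_scope.

Section Pairwise.
Variables (R : realType) (Z H : Type) (loss : H -> Z -> Z -> R).

(* Rademacher complexity R_s(l o H) at a fixed first argument z, for the
   distribution of the z_j being the uniform (empirical) distribution over a
   finite nonempty sample S : 'I_m -> Z:
   E_{z_j ~ unif S iid, eps uniform +-1} [ sup_h 1/s sum_j eps_j l(h,z,z_j) ]. *)
Definition rademacher (s m : nat) (S : 'I_m -> Z) (z : Z) : R :=
  (m%:R ^+ s)^-1 * (2%:R ^+ s)^-1 *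
  \sum_(zs : {ffun 'I_s -> 'I_m}) \sum_(eps : {ffun 'I_s -> bool})
     sup (range (fun h : H =>
        s%:R^-1 * \sum_(j < s) ((if eps j then 1 else -1) * loss h z (S (zs j))))).

(* Randomness used by RS-x on a stream of length n with buffer size s:
   - the s indices drawn uniformly with replacement from B u {z_t} at t = s+1,
   - for each step t and buffer entry j, a rsx_coin of bias 1/t. *)
Definition rsx_omega (n s : nat) : finType :=
  ({ffun 'I_s -> 'I_s.+1} * {ffun 'I_n.+1 -> {ffun 'I_s -> bool}})%type.

Definition coin_weight (t : nat) (b : bool) : R :=
  if b then t%:R^-1 else 1 - t%:R^-1.

Definition rsx_weight (n s : nat) (w : rsx_omega n s) : R :=
  (\prod_(j < s) (s.+1)%:R^-1) *
  \prod_(t < n.+1) \prod_(j < s) coin_weight t (w.2 t j).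

Definition rsx_Prob (n s : nat) (E : pred (rsx_omega n s)) : R :=
  \sum_(w : rsx_omega n s | E w) rsx_weight w.

Variables (n s : nat) (z : nat -> Z) (w : rsx_omega n s).

Definition rsx_coin (t : nat) (j : 'I_s) : bool := w.2 (inord t) j.

Definition rsx_update (B : seq Z) (t : nat) : seq Z :=
  if (size B < s)%N then rcons B (z t)
  else if (t == s.+1)%N then
    [seq nth (z t) (rcons B (z t)) (w.1 j) | j <- enum 'I_s]
  else [seq (if rsx_coin t j then z t else nth (z t) B j) | j <- enum 'I_s].

(* rsx_buf t = B_t, the buffer after processing z_1, ..., z_{t-1} *)
Fixpoint rsx_buf (t : nat) : seq Z :=
  match t with
  | 0 => [::]
  | t'.+1 => if t' == 0%N then [::] else rsx_update (rsx_buf t') t'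
  end.

Definition allpairs_pen (t : nat) (h : H) : R :=
  (t.-1)%:R^-1 * \sum_(1 <= tau < t) loss h (z t) (z tau).

Definition bufpen (t : nat) (h : H) : R :=
  (size (rsx_buf t))%:R^-1 * \sum_(x <- rsx_buf t) loss h (z t) x.

Definition regret (hs : nat -> H) : R :=
  \sum_(2 <= t < n.+1) allpairs_pen t (hs t.-1)
  - inf (range (fun h => \sum_(2 <= t < n.+1) allpairs_pen t h)).

Definition regret_buf (hs : nat -> H) : R :=
  \sum_(2 <= t < n.+1) bufpen t (hs t.-1)
  - inf (range (fun h => \sum_(2 <= t < n.+1) bufpen t h)).

End Pairwise.

From HB Require Import structures.
From mathcomp Require Import all_boot all_order all_algebra.
From mathcomp Require Import boolp classical_sets reals exp.
From mathcomp Require Import sequences ring lra.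
Set Implicit Arguments. Unset Strict Implicit. Unset Printing Implicit Defensive.
Import Order.TTheory GRing.Theory Num.Theory.
Local Open Scope ring_scope.
Local Open Scope classical_set_scope.

(* For t <= s + 1 the RS-x buffer holds all of z_1, ..., z_{t-1}, so both
   penalties agree.  From step s + 2 on, the replacement coins telescope so that
   each buffer slot independently holds z_k with probability 1/(t-1) for every
   k < t: the buffer is an i.i.d. uniform sample of size s from z_1, ..., z_{t-1}.
   By symmetrization the expected uniform deviation sup_h |L_t(h) - L^buf_t(h)|
   is at most twice the Rademacher complexity, and by McDiarmid's inequality
   (differences bounded by B/s) it exceeds that mean by sqrt(8 B^2 log(2n/delta)/s)
   with probability at most delta/n.  A union bound over the steps gives a
   uniform penalty gap eps at every step with probability 1 - delta, and
   comparing both regrets at the minimizer of the all-pairs objective costs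
   2 (n - 1) eps. *)

Section SupInfRange.
Variables (R : realType) (T : Type).
Implicit Types (f : T -> R).

Lemma sup_range_ub f M : (forall x, f x <= M) -> forall x, f x <= sup (range f).
Proof.
move=> hM x; apply: ub_le_sup; last by exists x.
by exists M => y [x' _ <-].
Qed.

Lemma sup_range_le f b (x0 : T) : (forall x, f x <= b) -> sup (range f) <= b.
Proof.
move=> hb; apply: ge_sup; first by exists (f x0), x0.
by move=> y [x' _ <-].
Qed.

Lemma inf_range_lb f M : (forall x, M <= f x) -> forall x, inf (range f) <= f x.
Proof.
move=> hM x; apply: ge_inf; last by exists x.
by exists M => y [x' _ <-].
Qed.

Lemma inf_range_ge f b (x0 : T) : (forall x, b <= f x) -> b <= inf (range f).
Proof.
move=> hb; apply: lb_le_inf; first by exists (f x0), x0.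
by move=> y [x' _ <-].
Qed.

Lemma sup_range_dist f1 f2 M c (x0 : T) :
  (forall x, f1 x <= M) -> (forall x, f2 x <= M) ->
  (forall x, `|f1 x - f2 x| <= c) ->
  `|sup (range f1) - sup (range f2)| <= c.
Proof.
move=> b1 b2 h12.
have u1 := sup_range_ub b1; have u2 := sup_range_ub b2.
have s1 : sup (range f1) <= sup (range f2) + c.
  apply: sup_range_le x0 _ => x.
  by have := h12 x; rewrite ler_norml => /andP[ha hb]; have := u2 x; lra.
have s2 : sup (range f2) <= sup (range f1) + c.
  apply: sup_range_le x0 _ => x.
  by have := h12 x; rewrite ler_norml => /andP[ha hb]; have := u1 x; lra.
by rewrite ler_norml; apply/andP; split; lra.
Qed.
End SupInfRange.

Section ExpBounds.
Variable R : realType.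

Lemma expR_le_invB (y : R) : y < 1 -> expR y <= (1 - y)^-1.
Proof.
move=> hy.
have h1 : 1 - y <= expR (- y) by have := expR_ge1Dx (- y); rewrite addrC.
rewrite -[expR y]invrK -expRN lef_pV2 ?posrE ?expR_gt0 //; lra.
Qed.

Lemma expR_le_quadratic (y : R) : `|y| <= 2^-1 -> expR y <= 1 + y + 2 * y ^+ 2.
Proof.
rewrite ler_norml => /andP[hy1 hy2].
apply: (le_trans (expR_le_invB _)); first lra.
have hpos : 0 < 1 - y by lra.
rewrite -(ler_pM2l hpos) mulrV ?unitfE ?gt_eqF //.
have : 0 <= y ^+ 2 * (1 - 2 * y) by apply: mulr_ge0; [exact: sqr_ge0| lra].
by move=> h; nra.
Qed.

Lemma ln2_ge_quarter : 4^-1 <= ln (2 : R).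
Proof.
have h : expR (4^-1 : R) <= 2.
  apply: (le_trans (expR_le_invB _)); first lra.
  rewrite -[X in _ <= X]invrK lef_pV2 ?posrE; lra.
by rewrite -[X in X <= _](expRK (4^-1 : R)) ler_ln ?posrE ?expR_gt0.
Qed.
End ExpBounds.

Definition ind (R : realType) (b : bool) : R := if b then 1 else 0.
Arguments ind {R}.

Lemma ind_ge0 (R : realType) b : 0 <= ind b :> R.
Proof. by case: b. Qed.

Lemma ind_orb (R : realType) a b : ind (a || b) <= ind a + ind b :> R.
Proof. by case: a; case: b => /=; rewrite /ind; lra. Qed.

Lemma ind_andb (R : realType) a b : ind (a && b) = ind a * ind b :> R.
Proof. by case: a; case: b; rewrite /ind /= ?mulr1 ?mulr0. Qed.

Lemma prod_ind (R : realType) (I : finType) (P : pred I) :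
  \prod_i ind (P i) = ind [forall i, P i] :> R.
Proof.
case: (boolP [forall i, P i]) => h.
  by apply: big1 => i _; move/forallP: h => /(_ i) ->.
by move/forallPn: h => [i hi]; rewrite (bigD1 i) //= /ind (negbTE hi) mul0r.
Qed.

Lemma sum_ind_eq (R : realType) (T : finType) (v : T) (F : T -> R) :
  \sum_k ind (v == k) * F k = F v.
Proof.
rewrite (bigD1 v) //= eqxx mul1r big1 ?addr0 // => k hk.
by rewrite /ind eq_sym (negbTE hk) mul0r.
Qed.

Section Average.
Variable R : realType.
Definition avg {T : finType} (f : T -> R) : R := (#|T|%:R)^-1 * \sum_x f x.

Variable T : finType.
Implicit Types f g : T -> R.

Lemma avg_cst a : (0 < #|T|)%N -> avg (fun _ : T => a) = a.
Proof.
move=> hT; rewrite /avg sumr_const (@eq_card T (fun _ => true) T) //.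
by rewrite -[a *+ #|T|]mulr_natr mulrC -mulrA mulfV ?mulr1 // pnatr_eq0 -lt0n.
Qed.

Lemma avgD f g : avg (fun x => f x + g x) = avg f + avg g.
Proof. by rewrite /avg big_split mulrDr. Qed.

Lemma avgZ a f : avg (fun x => a * f x) = a * avg f.
Proof. by rewrite /avg -mulr_sumr mulrCA. Qed.

Lemma avgN f : avg (fun x => - f x) = - avg f.
Proof. by rewrite /avg sumrN mulrN. Qed.

Lemma avgB f g : avg (fun x => f x - g x) = avg f - avg g.
Proof. by rewrite avgD avgN. Qed.

Lemma ler_avg f g : (forall x, f x <= g x) -> avg f <= avg g.
Proof.
move=> h; rewrite /avg ler_wpM2l ?invr_ge0 ?ler0n //.
by apply: ler_sum => x _; exact: h.
Qed.

Lemma avg_le_cst f c : (0 < #|T|)%N -> (forall x, f x <= c) -> avg f <= c.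
Proof. by move=> hT h; rewrite -(avg_cst c hT); apply: ler_avg. Qed.

Lemma avg_norm_le f c : (0 < #|T|)%N -> (forall x, `|f x| <= c) -> `|avg f| <= c.
Proof.
move=> hT h; rewrite ler_norml; apply/andP; split.
  rewrite lerNl -avgN; apply: avg_le_cst => // x.
  by have := h x; rewrite ler_norml => /andP[h1 _]; rewrite lerNl.
by apply: avg_le_cst => // x; have := h x; rewrite ler_norml => /andP[_ ->].
Qed.

(* Hoeffding's lemma with a crude constant: for [l * c <= 1/2] the quadratic
   bound on [expR] suffices. *)
Lemma hoeffding_lemma (X : T -> R) c l : (0 < #|T|)%N -> avg X = 0 ->
  (forall x, `|X x| <= c) -> 0 <= l -> l * c <= 2^-1 ->
  avg (fun x => expR (l * X x)) <= expR (2 * l ^+ 2 * c ^+ 2).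
Proof.
move=> hT h0 hX hl hlc.
have hpt : forall x, expR (l * X x) <= (1 + 2 * l ^+ 2 * c ^+ 2) + l * X x.
  move=> x; have hx := hX x.
  have hn : `|l * X x| <= 2^-1.
    by rewrite normrM ger0_norm //; apply: le_trans hlc; exact: ler_wpM2l.
  apply: (le_trans (expR_le_quadratic hn)).
  have : (l * X x) ^+ 2 <= l ^+ 2 * c ^+ 2.
    rewrite exprMn ler_wpM2l ?sqr_ge0 // -[X x ^+ 2]real_normK ?num_real //.
    by apply: lerXn2r => //; rewrite ?nnegrE ?normr_ge0 //; exact: le_trans hx.
  by move=> h; lra.
apply: (le_trans (ler_avg hpt)); rewrite avgD avgZ h0 mulr0 addr0 avg_cst //.
exact: expR_ge1Dx.
Qed.
End Average.

Section AverageProducts.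
Variable R : realType.

Lemma avg_exch (T1 T2 : finType) (F : T1 -> T2 -> R) :
  avg (fun a => avg (fun b => F a b)) = avg (fun b => avg (fun a => F a b)).
Proof.
by rewrite /avg -!mulr_sumr mulrCA; congr (_ * (_ * _)); exact: exchange_big.
Qed.

Lemma avg_pair (T1 T2 : finType) (F : T1 -> T2 -> R) :
  avg (fun a => avg (fun b => F a b)) = avg (fun p : T1 * T2 => F p.1 p.2).
Proof.
rewrite /avg -mulr_sumr mulrA card_prod natrM invfM [_^-1 * _^-1]mulrC.
by rewrite pair_big.
Qed.

Lemma avg_reindex (T : finType) (g g' : T -> T) (F : T -> R) :
  cancel g g' -> avg (fun x => F (g x)) = avg F.
Proof.
move=> gK; rewrite /avg; congr (_ * _).
by rewrite [RHS](reindex_inj (can_inj gK)).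
Qed.

Lemma avg_sum (T I : finType) (F : I -> T -> R) :
  avg (fun x => \sum_i F i x) = \sum_i avg (F i).
Proof. by rewrite /avg exchange_big mulr_sumr. Qed.
End AverageProducts.

Section McDiarmid.
Variables (R : realType) (m : nat).
Hypothesis m_gt0 : (0 < m)%N.

Definition ffcons s (x : 'I_m) (g : {ffun 'I_s -> 'I_m}) : {ffun 'I_s.+1 -> 'I_m} :=
  [ffun i => if unlift ord0 i is Some i' then g i' else x].

Lemma ffcons0 s x (g : {ffun 'I_s -> 'I_m}) : ffcons x g ord0 = x.
Proof. by rewrite ffunE unlift_none. Qed.

Lemma ffconsS s x (g : {ffun 'I_s -> 'I_m}) i : ffcons x g (lift ord0 i) = g i.
Proof. by rewrite ffunE liftK. Qed.

Lemma sum_ffcons s (F : {ffun 'I_s.+1 -> 'I_m} -> R) :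
  \sum_f F f = \sum_x \sum_g F (ffcons x g).
Proof.
rewrite pair_big /=.
rewrite (reindex (fun p : 'I_m * {ffun 'I_s -> 'I_m} => ffcons p.1 p.2)) //=.
exists (fun f : {ffun 'I_s.+1 -> 'I_m} => (f ord0, [ffun i => f (lift ord0 i)])).
  move=> [x g] _ /=; rewrite ffcons0; congr pair.
  by apply/ffunP => i; rewrite ffunE ffconsS.
move=> f _; apply/ffunP => i; rewrite ffunE.
by case: (unliftP ord0 i) => [j ->|->] //=; rewrite ffunE.
Qed.

Lemma card_ffun_ord s : #|{ffun 'I_s -> 'I_m}| = (m ^ s)%N.
Proof. by rewrite card_ffun !card_ord. Qed.

Lemma card_ffun_ord_gt0 s : (0 < #|{ffun 'I_s -> 'I_m}|)%N.
Proof. by rewrite card_ffun_ord expn_gt0 m_gt0. Qed.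

Lemma avg_ffcons s (F : {ffun 'I_s.+1 -> 'I_m} -> R) :
  avg F = avg (fun g : {ffun 'I_s -> 'I_m} => avg (fun x => F (ffcons x g))).
Proof.
rewrite /avg sum_ffcons exchange_big /= mulr_sumr !card_ffun_ord card_ord.
rewrite expnS natrM invfM mulr_sumr; apply: eq_bigr => g _.
by rewrite mulrA [X in X * _]mulrC.
Qed.

Definition bounded_differences s (f : {ffun 'I_s -> 'I_m} -> R) (c : R) :=
  forall (k k' : {ffun 'I_s -> 'I_m}) (j0 : 'I_s),
    (forall j, j != j0 -> k j = k' j) -> `|f k - f k'| <= c.

Lemma bounded_differences_le s (f : {ffun 'I_s -> 'I_m} -> R) c c' :
  c <= c' -> bounded_differences f c -> bounded_differences f c'.
Proof. by move=> hc hf k k' j0 hj; apply: le_trans (hf k k' j0 hj) hc. Qed.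

(* Martingale argument: average out the first coordinate and recurse on the rest. *)
Lemma mcdiarmid_mgf s (f : {ffun 'I_s -> 'I_m} -> R) c l :
  0 <= c -> 0 <= l -> l * c <= 2^-1 -> bounded_differences f c ->
  avg (fun k => expR (l * (f k - avg f))) <= expR (2 * s%:R * l ^+ 2 * c ^+ 2).
Proof.
move=> hc hl hlc; elim: s f => [|s IH] f hf.
  set k0 : {ffun 'I_0 -> 'I_m} := [ffun => Ordinal m_gt0].
  have hk : forall k : {ffun 'I_0 -> 'I_m}, k = k0 by move=> k; apply/ffunP => -[].
  have -> : avg f = f k0.
    rewrite -(avg_cst (f k0) (card_ffun_ord_gt0 0)); congr avg.
    by apply: funext => k; rewrite (hk k).
  rewrite mulr0n !mulr0 !mul0r; apply: avg_le_cst; first exact: card_ffun_ord_gt0.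
  by move=> k; rewrite (hk k) subrr mulr0.
have hm : (0 < #|'I_m|)%N by rewrite card_ord.
pose G (g : {ffun 'I_s -> 'I_m}) := avg (fun x => f (ffcons x g)).
have hG : bounded_differences G c.
  move=> g g' j0 hj; rewrite /G -avgB; apply: avg_norm_le => // x.
  apply: hf (lift ord0 j0) _ => j hjj; rewrite !ffunE.
  case: (unliftP ord0 j) hjj => [j' ->|->] //= hjj.
  by apply: hj; apply: contra hjj => /eqP ->.
have step g : avg (fun x => expR (l * (f (ffcons x g) - avg G))) <=
    expR (2 * l ^+ 2 * c ^+ 2) * expR (l * (G g - avg G)).
  have -> : (fun x => expR (l * (f (ffcons x g) - avg G))) =
      (fun x => expR (l * (G g - avg G)) * expR (l * (f (ffcons x g) - G g))).
    by apply: funext => x; rewrite -expRD; congr expR; ring.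
  rewrite avgZ mulrC ler_wpM2r ?expR_ge0 //.
  apply: hoeffding_lemma => //; first by rewrite avgB avg_cst // subrr.
  move=> x; rewrite /G -[f (ffcons x g)](avg_cst _ hm) -avgB.
  apply: avg_norm_le => // y; apply: hf ord0 _ => j hj.
  by rewrite !ffunE; case: (unliftP ord0 j) hj => [j' ->|->].
rewrite avg_ffcons -/(G _) (avg_ffcons f) -/G.
apply: (le_trans (ler_avg step)); rewrite avgZ.
apply: (le_trans (ler_wpM2l (expR_ge0 _) (IH G hG))).
rewrite -expRD (_ : _ + _ = 2 * s.+1%:R * l ^+ 2 * c ^+ 2) //.
by rewrite -addn1 natrD; ring.
Qed.

(* Chernoff bound with [l = u s / (4 Bp^2)], which satisfies [l * (Bp / s) <= 1/2]
   only for [u <= 2 Bp]; larger deviations are impossible since [|f| <= Bp]. *)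
Lemma mcdiarmid_tail s (f : {ffun 'I_s -> 'I_m} -> R) Bp u :
  (0 < s)%N -> 0 < Bp -> bounded_differences f (Bp / s%:R) ->
  (forall k, `|f k| <= Bp) -> 0 <= u ->
  avg (fun k => ind (u <= f k - avg f)) <= expR (- (u ^+ 2 * s%:R / (8 * Bp ^+ 2))).
Proof.
move=> hs hBp hf hb hu.
have hcard := card_ffun_ord_gt0 s.
have hsR : 0 < s%:R :> R by rewrite ltr0n.
have hab : `|avg f| <= Bp by apply: avg_norm_le.
have [hu2|hu2] := leP u (2 * Bp); last first.
  apply: (le_trans _ (ltW (expR_gt0 _))); apply: avg_le_cst => // k.
  rewrite /ind; case: ifP => // hk; exfalso.
  move: (hb k) hab; rewrite !ler_norml => /andP[_ h1] /andP[h2 _].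
  by move: hk; lra.
pose l := u * s%:R / (4 * Bp ^+ 2).
have hl : 0 <= l by rewrite /l divr_ge0 ?mulr_ge0 ?ler0n ?sqr_ge0 //; lra.
have hc : 0 <= Bp / s%:R by rewrite divr_ge0 //; lra.
have hlc : l * (Bp / s%:R) <= 2^-1.
  have -> : l * (Bp / s%:R) = u / (4 * Bp) by rewrite /l; field; lra.
  by rewrite ler_pdivrMr; lra.
have hpt k : ind (u <= f k - avg f) <= expR (- (l * u)) * expR (l * (f k - avg f)).
  rewrite -expRD /ind; case: ifP => hk; last exact: expR_ge0.
  have : 0 <= - (l * u) + l * (f k - avg f).
    by rewrite -mulrN -mulrDr mulr_ge0 // addrC subr_ge0.
  by move=> h; apply: le_trans (expR_ge1Dx _); lra.
apply: (le_trans (ler_avg hpt)); rewrite avgZ.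
apply: (le_trans (ler_wpM2l (expR_ge0 _) (mcdiarmid_mgf hc hl hlc hf))).
rewrite -expRD (_ : _ + _ = - (u ^+ 2 * s%:R / (8 * Bp ^+ 2))) //.
by rewrite /l; field; lra.
Qed.
End McDiarmid.


Lemma mean_le_cst (R : realType) n (g : 'I_n -> R) c : (0 < n)%N ->
  (forall j, g j <= c) -> n%:R^-1 * \sum_(j < n) g j <= c.
Proof.
move=> hn hg; rewrite ler_pdivrMl ?ltr0n //.
by apply: le_trans (ler_sum _ (fun j _ => hg j)) _; rewrite sumr_const card_ord mulr_natl.
Qed.

Lemma mean_ge_cst (R : realType) n (g : 'I_n -> R) c : (0 < n)%N ->
  (forall j, c <= g j) -> c <= n%:R^-1 * \sum_(j < n) g j.
Proof.
move=> hn hg; rewrite ler_pdivlMl ?ltr0n //.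
by apply: le_trans _ (ler_sum _ (fun j _ => hg j)); rewrite sumr_const card_ord mulr_natl.
Qed.

Lemma avg_ffun_coord (R : realType) m s (j : 'I_s) (phi : 'I_m -> R) : (0 < m)%N ->
  avg (fun k : {ffun 'I_s -> 'I_m} => phi (k j)) = avg phi.
Proof.
move=> hm.
have e : \sum_(k : {ffun 'I_s -> 'I_m}) phi (k j) =
    \prod_(j' < s) \sum_(y < m) (if j' == j then phi y else 1).
  rewrite bigA_distr_bigA /=; apply: eq_bigr => k _.
  by rewrite (bigD1 j) //= eqxx big1 ?mulr1 // => j' /negbTE ->.
rewrite /avg e (bigD1 j) //= eqxx.
have -> : \prod_(j' < s | j' != j) (\sum_(y < m) (if j' == j then phi y else 1))
    = m%:R ^+ s.-1.
  rewrite (eq_bigr (fun _ => m%:R)) ?prodr_const ?cardC1 ?card_ord //.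
  by move=> j' /negbTE ->; rewrite sumr_const card_ord.
have hm0 : m%:R ^+ s.-1 != 0 :> R by rewrite expf_neq0 // pnatr_eq0 -lt0n.
rewrite card_ffun_ord card_ord natrX -{1}(prednK (leq_ltn_trans (leq0n j) (ltn_ord j))) exprS invfM.
by rewrite mulrCA -mulrA mulVf // mulr1 mulrC.
Qed.

Section Symmetrization.
Variables (R : realType) (Z H : Type) (loss : H -> Z -> Z -> R) (B : R) (x : Z).
Variables (m s : nat) (S : 'I_m -> Z) (h0 : H).
Hypotheses (loss_bnd : forall h a b, 0 <= loss h a b <= B).
Hypotheses (m_gt0 : (0 < m)%N) (s_gt0 : (0 < s)%N).

Local Notation U := {ffun 'I_s -> 'I_m}.
Local Notation E := {ffun 'I_s -> bool}.

Definition sample_pen (k : U) (h : H) : R := s%:R^-1 * \sum_(j < s) loss h x (S (k j)).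
Definition pool_pen (h : H) : R := m%:R^-1 * \sum_(i < m) loss h x (S i).

Lemma sample_pen_ge0 k h : 0 <= sample_pen k h.
Proof. by apply: mean_ge_cst => // j; case/andP: (loss_bnd h x (S (k j))). Qed.
Lemma sample_pen_leB k h : sample_pen k h <= B.
Proof. by apply: mean_le_cst => // j; case/andP: (loss_bnd h x (S (k j))). Qed.
Lemma pool_pen_ge0 h : 0 <= pool_pen h.
Proof. by apply: mean_ge_cst => // j; case/andP: (loss_bnd h x (S j)). Qed.
Lemma pool_pen_leB h : pool_pen h <= B.
Proof. by apply: mean_le_cst => // j; case/andP: (loss_bnd h x (S j)). Qed.

Lemma avg_sample_pen h : avg (fun k : U => sample_pen k h) = pool_pen h.
Proof.
rewrite /sample_pen avgZ avg_sum.
rewrite (eq_bigr (fun _ => avg (fun i => loss h x (S i)))); last first.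
  by move=> j _; rewrite (avg_ffun_coord j (fun i => loss h x (S i))).
have hs0 : s%:R != 0 :> R by rewrite pnatr_eq0 -lt0n.
rewrite sumr_const card_ord -[avg _ *+ s]mulr_natl mulrA mulVf // mul1r.
by rewrite /avg card_ord.
Qed.

Definition dev_under (k : U) := sup (range (fun h => pool_pen h - sample_pen k h)).
Definition dev_over (k : U) := sup (range (fun h => sample_pen k h - pool_pen h)).

Lemma sup_pen_diff_norm (f g : H -> R) :
  (forall h, 0 <= f h <= B) -> (forall h, 0 <= g h <= B) ->
  `|sup (range (fun h => f h - g h))| <= B.
Proof.
move=> hf hg; have hb h : f h - g h <= B.
  by case/andP: (hf h) => ? ?; case/andP: (hg h) => ? ?; lra.
rewrite ler_norml; apply/andP; split; last exact: sup_range_le h0 _.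
apply: le_trans (sup_range_ub hb h0).
by case/andP: (hf h0) => ? ?; case/andP: (hg h0) => ? ?; lra.
Qed.

Lemma dev_under_norm k : `|dev_under k| <= B.
Proof.
apply: sup_pen_diff_norm => h; first by rewrite pool_pen_ge0 pool_pen_leB.
by rewrite sample_pen_ge0 sample_pen_leB.
Qed.

Lemma dev_over_norm k : `|dev_over k| <= B.
Proof.
apply: sup_pen_diff_norm => h; last by rewrite pool_pen_ge0 pool_pen_leB.
by rewrite sample_pen_ge0 sample_pen_leB.
Qed.

Lemma sample_pen_bounded_differences (k k' : U) (j0 : 'I_s) :
  (forall j, j != j0 -> k j = k' j) ->
  forall h, `|sample_pen k h - sample_pen k' h| <= B / s%:R.
Proof.
move=> hj h; rewrite /sample_pen -mulrBr -sumrB (bigD1 j0) //= big1 ?addr0; last first.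
  by move=> j /hj ->; rewrite subrr.
rewrite normrM ger0_norm ?invr_ge0 ?ler0n // mulrC ler_wpM2r ?invr_ge0 ?ler0n //.
case/andP: (loss_bnd h x (S (k j0))) => ? ?; case/andP: (loss_bnd h x (S (k' j0))) => ? ?.
by rewrite ler_norml; apply/andP; split; lra.
Qed.

Lemma dev_under_bounded_differences : bounded_differences dev_under (B / s%:R).
Proof.
move=> k k' j0 hj; apply: (sup_range_dist (M := B)) h0 _ _ _.
- by move=> h; have := pool_pen_leB h; have := sample_pen_ge0 k h; lra.
- by move=> h; have := pool_pen_leB h; have := sample_pen_ge0 k' h; lra.
by move=> h; have := sample_pen_bounded_differences hj h; rewrite !ler_norml; lra.
Qed.

Lemma dev_over_bounded_differences : bounded_differences dev_over (B / s%:R).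
Proof.
move=> k k' j0 hj; apply: (sup_range_dist (M := B)) h0 _ _ _.
- by move=> h; have := sample_pen_leB k h; have := pool_pen_ge0 h; lra.
- by move=> h; have := sample_pen_leB k' h; have := pool_pen_ge0 h; lra.
by move=> h; have := sample_pen_bounded_differences hj h; rewrite !ler_norml; lra.
Qed.

Definition sign (b : bool) : R := if b then 1 else -1.

Definition rademacher_sup (eps : E) (k : U) :=
  sup (range (fun h => s%:R^-1 * \sum_(j < s) (sign (eps j) * loss h x (S (k j))))).

Lemma card_signs_gt0 : (0 < #|E|)%N.
Proof. by rewrite card_ffun card_bool expn_gt0. Qed.

Lemma rademacherE :
  rademacher loss s S x = avg (fun k : U => avg (fun eps : E => rademacher_sup eps k)).
Proof.
by rewrite /rademacher /avg card_ffun_ord card_ffun card_bool card_ord !natrX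
  -mulrA mulr_sumr.
Qed.

Definition ghost_dev (k k' : U) := sup (range (fun h => sample_pen k' h - sample_pen k h)).

Lemma ghost_dev_ub k k' h : sample_pen k' h - sample_pen k h <= ghost_dev k k'.
Proof.
have hb h' : sample_pen k' h' - sample_pen k h' <= B.
  by have := sample_pen_leB k' h'; have := sample_pen_ge0 k h'; lra.
exact: (sup_range_ub hb).
Qed.

(* The pool mean is the average over a ghost sample [k'] (Jensen for [sup]). *)
Lemma avg_dev_under_le : avg dev_under <= avg (fun k => avg (fun k' => ghost_dev k k')).
Proof.
apply: ler_avg => k; apply: sup_range_le h0 _ => h.
rewrite -(avg_sample_pen h) -[sample_pen k h](avg_cst _ (card_ffun_ord_gt0 m_gt0 s)) -avgB.
by apply: ler_avg => k'; exact: ghost_dev_ub.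
Qed.

Lemma avg_dev_over_le : avg dev_over <= avg (fun k => avg (fun k' => ghost_dev k' k)).
Proof.
apply: ler_avg => k; apply: sup_range_le h0 _ => h.
rewrite -(avg_sample_pen h) -[sample_pen k h](avg_cst _ (card_ffun_ord_gt0 m_gt0 s)) -avgB.
by apply: ler_avg => k'; exact: ghost_dev_ub.
Qed.

(* Swapping the coordinates [j] with [eps j] between the sample and the ghost
   sample preserves the uniform distribution on pairs and flips the signs. *)
Definition swap_coords (eps : E) (p : U * U) : U * U :=
  ([ffun j => if eps j then p.1 j else p.2 j], [ffun j => if eps j then p.2 j else p.1 j]).

Lemma swap_coordsK eps : involutive (swap_coords eps).
Proof.
move=> [a b]; rewrite /swap_coords /=; congr pair; apply/ffunP => j;
  by rewrite !ffunE; case: (eps j).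
Qed.

Definition signed_ghost_dev (eps : E) (k k' : U) := sup (range (fun h => s%:R^-1 *
  \sum_(j < s) (sign (eps j) * (loss h x (S (k' j)) - loss h x (S (k j)))))).

Lemma avg_ghost_dev_signed eps : avg (fun k => avg (fun k' => ghost_dev k k')) =
  avg (fun k => avg (fun k' => signed_ghost_dev eps k k')).
Proof.
rewrite !avg_pair -(avg_reindex (fun p : U * U => ghost_dev p.1 p.2) (swap_coordsK eps)).
congr avg; apply: funext => p; rewrite /ghost_dev /signed_ghost_dev /sample_pen.
do 2 f_equal; apply: funext => h; rewrite -mulrBr -sumrB; congr (_ * _).
by apply: eq_bigr => j _; rewrite /swap_coords /= !ffunE /sign; case: (eps j) => /=; ring.
Qed.

Definition negf (eps : E) : E := [ffun j => ~~ eps j].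

Lemma negfK : involutive negf.
Proof. by move=> e; apply/ffunP => j; rewrite !ffunE negbK. Qed.

Lemma rademacher_sup_ub (eps : E) (k : U) h :
  s%:R^-1 * \sum_(j < s) (sign (eps j) * loss h x (S (k j))) <= rademacher_sup eps k.
Proof.
have hb h' : s%:R^-1 * \sum_(j < s) (sign (eps j) * loss h' x (S (k j))) <= B.
  apply: mean_le_cst => // j; case/andP: (loss_bnd h' x (S (k j))) => a b.
  by rewrite /sign; case: (eps j); lra.
exact: (sup_range_ub hb).
Qed.

Lemma signed_ghost_dev_le eps k k' :
  signed_ghost_dev eps k k' <= rademacher_sup eps k' + rademacher_sup (negf eps) k.
Proof.
apply: sup_range_le h0 _ => h.
apply: le_trans (lerD (rademacher_sup_ub eps k' h) (rademacher_sup_ub (negf eps) k h)).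
rewrite -mulrDr -big_split /= ler_wpM2l ?invr_ge0 ?ler0n //.
apply: ler_sum => j _; rewrite /negf ffunE /sign; case: (eps j) => /=; lra.
Qed.

Lemma avg_ghost_dev_le : avg (fun k => avg (fun k' => ghost_dev k k')) <=
  2 * rademacher loss s S x.
Proof.
have hU := card_ffun_ord_gt0 m_gt0 s.
rewrite -[X in X <= _](avg_cst _ card_signs_gt0).
rewrite (_ : avg _ = avg (fun eps =>
    avg (fun k => avg (fun k' => signed_ghost_dev eps k k')))); last first.
  by congr avg; apply: funext => eps; exact: avg_ghost_dev_signed.
apply: le_trans (ler_avg (fun eps => ler_avg (fun k => ler_avg (fun k' =>
  signed_ghost_dev_le eps k k')))) _.
under eq_fun do under eq_fun do rewrite avgD avg_cst //.
under eq_fun do rewrite avgD avg_cst //.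
rewrite avgD (avg_reindex (fun eps => avg (fun k => rademacher_sup eps k)) negfK).
by rewrite -avg_exch -rademacherE; lra.
Qed.

Lemma avg_dev_under_le_rademacher : avg dev_under <= 2 * rademacher loss s S x.
Proof. exact: le_trans avg_dev_under_le avg_ghost_dev_le. Qed.

Lemma avg_dev_over_le_rademacher : avg dev_over <= 2 * rademacher loss s S x.
Proof. by apply: le_trans avg_dev_over_le _; rewrite avg_exch; exact: avg_ghost_dev_le. Qed.

End Symmetrization.


Section RSX.
Variables (Z : Type) (n s : nat) (z : nat -> Z) (w : rsx_omega n s).

(* [slot_src a c t] is the [k] such that a buffer slot holds [z_k] after
   z_1, ..., z_{t-1} have been processed, when the slot was refilled at step
   [s + 1] with entry [a] of [B u {z_(s+1)}], i.e. [z_(a+1)], and [c tau] is the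
   coin of the slot at step [tau]. *)
Fixpoint slot_src (a : nat) (c : nat -> bool) (t : nat) : nat :=
  match t with
  | 0 => a.+1
  | t'.+1 => if (s.+2 <= t')%N && c t' then t' else slot_src a c t'
  end.

Definition buf_src (j : 'I_s) t := slot_src (w.1 j) (fun tau => rsx_coin w tau j) t.

Lemma slot_src_init a c t : (t <= s.+2)%N -> slot_src a c t = a.+1.
Proof.
elim: t => //= t IH ht.
have -> : (s.+2 <= t)%N = false by apply/negbTE; rewrite -ltnNge; exact: ht.
by apply: IH; exact: ltnW.
Qed.

Lemma slot_src_gt0 a c t : (1 <= slot_src a c t)%N.
Proof.
elim: t => //= t IH; case: ifP => // /andP[h _]; exact: leq_trans h.
Qed.

Lemma slot_src_lt a c t : (a < s.+1)%N -> (s.+2 <= t)%N -> (slot_src a c t < t)%N.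
Proof.
move=> ha; elim: t => // t IH ht /=.
case: ifP => // /negbT hn.
have [h1|h1] := leqP (s.+2) t; first by apply: leq_trans (IH h1) _.
have -> : t.+1 = s.+2 by apply/eqP; rewrite eqn_leq ht h1.
by rewrite slot_src_init ?(ltnW h1).
Qed.

Lemma rsx_buf_prefix t : (1 <= t <= s.+1)%N -> rsx_buf z w t = map z (iota 1 t.-1).
Proof.
elim: t => // t IH /andP[_ ht] /=.
case: (eqVneq t 0) => [-> //|t0].
have ht1 : (1 <= t <= s.+1)%N by rewrite lt0n t0 /= ltnW.
rewrite IH // /rsx_update size_map size_iota.
have -> : (t.-1 < s)%N by rewrite -ltnS prednK ?lt0n.
case: t IH ht t0 ht1 => [//|k] IH ht _ ht1.
change (k.+1.-1) with k.
by rewrite -map_rcons -cats1 -[in RHS](addn1 k) iotaD add1n.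
Qed.

Lemma nth_rcons_iota (T : Type) (f : nat -> T) k d (i : 'I_k.+1) :
  nth d (rcons (map f (iota 1 k)) (f k.+1)) i = f i.+1.
Proof.
have e : rcons (iota 1 k) k.+1 = iota 1 k.+1
  by rewrite -cats1 -[in RHS](addn1 k) iotaD add1n.
by rewrite -map_rcons e (nth_map 0%N) ?size_iota ?ltn_ord // nth_iota ?ltn_ord.
Qed.

Lemma rsx_buf_slots t : (s.+2 <= t)%N ->
  rsx_buf z w t = [seq z (buf_src j t) | j <- enum 'I_s].
Proof.
elim: t => // t IH ht /=.
have t0 : t != 0%N by move: ht; case: t IH.
rewrite (negbTE t0).
have [h1|h1] := leqP (s.+2) t.
  rewrite IH // /rsx_update size_map size_enum_ord ltnn.
  have -> : (t == s.+1) = false by apply/negbTE; rewrite neq_ltn h1 orbT.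
  apply: eq_map => j.
  rewrite (nth_map j) ?size_enum_ord ?ltn_ord // nth_ord_enum /buf_src /= h1 /=.
  by case: (rsx_coin w t j).
have et : t = s.+1 by apply/eqP; rewrite eqn_leq; apply/andP; split; [exact: h1|exact: ht].
rewrite et rsx_buf_prefix; last by rewrite leqnn.
rewrite /rsx_update size_map size_iota ltnn eqxx /=.
apply: eq_map => j; rewrite /buf_src slot_src_init //.
by rewrite nth_rcons_iota.
Qed.

Lemma bufpen_allpairs (R : realType) H (loss : H -> Z -> Z -> R) t h : (1 <= t <= s.+1)%N ->
  bufpen loss z w t h = allpairs_pen loss z t h.
Proof.
move=> ht; rewrite /bufpen /allpairs_pen rsx_buf_prefix // size_map size_iota big_map.
by rewrite /index_iota subn1.
Qed.

Lemma bufpen_slots (R : realType) H (loss : H -> Z -> Z -> R) t h : (s.+2 <= t)%N ->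
  bufpen loss z w t h = s%:R^-1 * \sum_(j < s) loss h (z t) (z (buf_src j t)).
Proof.
move=> ht; rewrite /bufpen rsx_buf_slots // size_map size_enum_ord big_map.
by rewrite big_enum.
Qed.
End RSX.

Section Distribution.
Variables (R : realType) (n s : nat).

Local Notation Om := (rsx_omega n s).
Local Notation Coins := {ffun 'I_n.+1 -> bool}.
Local Notation cw := (coin_weight R).

Lemma sum_rsx_omega_slots (G : 'I_s -> 'I_s.+1 -> Coins -> R) :
  \sum_(w : Om) \prod_j G j (w.1 j) [ffun tau => w.2 tau j] =
  \prod_j \sum_a \sum_C G j a C.
Proof.
transitivity (\sum_(w1 : {ffun 'I_s -> 'I_s.+1})
   \sum_(w2 : {ffun 'I_n.+1 -> {ffun 'I_s -> bool}})
     \prod_j G j (w1 j) [ffun tau => w2 tau j]); first by rewrite pair_big.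
rewrite bigA_distr_bigA; apply: eq_bigr => w1 _; rewrite bigA_distr_bigA.
rewrite (reindex (fun W : {ffun 'I_s -> Coins} => [ffun tau => [ffun j => W j tau]])) /=.
  apply: eq_bigr => W _; apply: eq_bigr => j _; congr (G _ _ _).
  by apply/ffunP => tau; rewrite !ffunE.
exists (fun w2 : {ffun 'I_n.+1 -> {ffun 'I_s -> bool}} => [ffun j => [ffun tau => w2 tau j]]).
  by move=> W _; apply/ffunP => j; apply/ffunP => tau; rewrite !ffunE.
by move=> w2 _; apply/ffunP => tau; apply/ffunP => j; rewrite !ffunE.
Qed.

Lemma rsx_weight_slots (w : Om) : rsx_weight R w =
  \prod_j ((s.+1)%:R^-1 * \prod_(tau < n.+1) cw tau ([ffun t => w.2 t j] tau)).
Proof.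
rewrite /rsx_weight big_split /=; congr (_ * _).
by rewrite exchange_big /=; apply: eq_bigr => j _; apply: eq_bigr => tau _; rewrite ffunE.
Qed.

Lemma coin_weight_ge0 t b : 0 <= cw t b.
Proof.
rewrite /coin_weight; case: b; first by rewrite invr_ge0 ler0n.
case: t => [|t]; first by rewrite invr0 subr0.
by rewrite subr_ge0 invf_le1 ?ltr0n // ler1n.
Qed.

Lemma rsx_weight_ge0 (w : Om) : 0 <= rsx_weight R w.
Proof.
rewrite /rsx_weight mulr_ge0 //; apply: prodr_ge0 => *;
  rewrite ?invr_ge0 ?ler0n //; apply: prodr_ge0 => *; exact: coin_weight_ge0.
Qed.

Lemma sum_coin_paths : \sum_(C : Coins) \prod_(tau < n.+1) cw tau (C tau) = 1.
Proof.
rewrite -(bigA_distr_bigA (fun (tau : 'I_n.+1) (b : bool) => cw tau b)) /=.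
by apply: big1 => tau _; rewrite big_bool /coin_weight /= addrC subrK.
Qed.

Lemma rsx_total_weight : \sum_(w : Om) rsx_weight R w = 1.
Proof.
under eq_bigr do rewrite rsx_weight_slots.
rewrite (sum_rsx_omega_slots (fun j a C => (s.+1)%:R^-1 * \prod_(tau < n.+1) cw tau (C tau))).
apply: big1 => j _; rewrite (eq_bigr (fun _ => (s.+1)%:R^-1)); last first.
  by move=> a _; rewrite -mulr_sumr sum_coin_paths mulr1.
by rewrite sumr_const card_ord -[(s.+1)%:R^-1 *+ _]mulr_natl mulfV // pnatr_eq0.
Qed.

Lemma prod_ord_range (F : nat -> R) lo hi : (hi <= n.+1)%N ->
  \prod_(tau < n.+1) (if (lo <= tau < hi)%N then F tau else 1) =
  \prod_(lo <= tau < hi) F tau.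
Proof. by move=> hhi; rewrite -big_mkcond /= big_geq_mkord (big_ord_widen_cond n.+1). Qed.

Lemma prod_survival lo hi : (2 <= lo <= hi)%N ->
  \prod_(lo <= tau < hi) (1 - tau%:R^-1) = (lo.-1)%:R / (hi.-1)%:R :> R.
Proof.
case/andP=> hlo; elim: hi => [|hi IH] hh.
  by move: hh; rewrite leqn0 => /eqP h; rewrite h in hlo.
have [e|hl] := eqVneq lo hi.+1.
  by rewrite e big_geq // mulfV // pnatr_eq0 -lt0n -ltnS -e.
have hlh : (lo <= hi)%N by rewrite -ltnS ltn_neqAle hl hh.
rewrite big_nat_recr //= IH //.
have hi1 : (1 < hi)%N by exact: leq_trans hlo hlh.
have e : (hi%:R : R) = (hi.-1)%:R + 1 by rewrite natr1 prednK // ltnW.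
have h1 : (hi.-1)%:R != 0 :> R by rewrite pnatr_eq0 -lt0n -ltnS prednK // ltnW.
have h2 : (hi.-1)%:R + 1 != 0 :> R by rewrite -e pnatr_eq0 -lt0n ltnW.
by rewrite e; field; rewrite h1 h2.
Qed.

(* The event [slot_src a C t == k0] is a product of one factor for the initial
   draw and one factor per coin: coin [k0] must land heads (if [k0] is a
   replacement time) and every later coin before [t] must land tails. *)
Definition init_factor (k0 a : nat) : R := if (s.+2 <= k0)%N then 1 else ind (a.+1 == k0).
Definition coin_factor (t k0 tau : nat) (b : bool) : R :=
  if (tau == k0) && (s.+2 <= k0)%N then ind b
  else if (maxn s.+2 k0.+1 <= tau < t)%N then ind (~~ b) else 1.

Lemma coin_factor_succ t k0 tau b : tau != t ->
  coin_factor t.+1 k0 tau b = coin_factor t k0 tau b.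
Proof.
by move=> /negbTE htau; rewrite /coin_factor [(tau < t.+1)%N]ltnS [(tau <= t)%N]leq_eqVlt htau.
Qed.

Lemma slot_src_ind_init (a : 'I_s.+1) (C : Coins) k0 : (1 <= k0 < s.+2)%N ->
  ind (slot_src s a (fun tau => C (inord tau)) s.+2 == k0) =
  init_factor k0 a * \prod_(tau < n.+1) coin_factor s.+2 k0 tau (C tau).
Proof.
case/andP=> hk1 hk2; have hk0 : (s.+2 <= k0)%N = false by rewrite leqNgt hk2.
rewrite slot_src_init // /init_factor hk0 big1 ?mulr1 // => tau _.
rewrite /coin_factor hk0 andbF (maxn_idPl hk2).
by case: ifP => // /andP[h1 h2]; move: (leq_trans h2 h1); rewrite ltnn.
Qed.

Lemma slot_src_indE (a : 'I_s.+1) (C : Coins) d k0 :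
  (s.+2 + d <= n.+1)%N -> (1 <= k0 < s.+2 + d)%N ->
  ind (slot_src s a (fun tau => C (inord tau)) (s.+2 + d) == k0) =
  init_factor k0 a * \prod_(tau < n.+1) coin_factor (s.+2 + d) k0 tau (C tau).
Proof.
elim: d k0 => [|d IH] k0 ht hk; first by rewrite addn0 slot_src_ind_init // -(addn0 s.+2).
rewrite addnS in ht hk *; set t := (s.+2 + d)%N in ht hk IH *.
have htn : (t < n.+1)%N by exact: ht.
have hst : (s.+2 <= t)%N by rewrite /t leq_addr.
have hinord : inord t = Ordinal htn :> 'I_n.+1 by apply: val_inj; rewrite /= inordK.
rewrite [slot_src _ _ _ t.+1]/= hst /= hinord (bigD1 (Ordinal htn)) //=.
have hlt := slot_src_lt (fun tau => C (inord tau)) (ltn_ord a) hst.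
case/andP: hk => hk1 hk2.
have other_tau tau : tau != Ordinal htn -> (nat_of_ord tau == t) = false.
  by move=> htau; apply/negbTE; apply: contra htau => /eqP h; apply/eqP; apply: val_inj.
have [->|nek] := eqVneq k0 t.
  rewrite /init_factor hst /coin_factor eqxx hst /= mul1r big1 ?mulr1; last first.
    move=> tau /other_tau ->; case: ifP => // /andP[h1 h2].
    by move: (leq_trans (leq_maxr _ _) h1); rewrite leqNgt h2.
  by case: (C (Ordinal htn)); rewrite /ind ?eqxx ?(ltn_eqF hlt).
have hk2' : (k0 < t)%N by rewrite ltn_neqAle nek -ltnS.
have -> : (if C (Ordinal htn) then t else slot_src s a (fun tau => C (inord tau)) t) == k0
  = ~~ C (Ordinal htn) && (slot_src s a (fun tau => C (inord tau)) t == k0).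
  by case: (C (Ordinal htn)) => //=; rewrite eq_sym (negbTE nek).
rewrite ind_andb IH ?hk1 ?hk2' ?(ltnW htn) // (bigD1 (Ordinal htn)) //=.
have -> : coin_factor t.+1 k0 t (C (Ordinal htn)) = ind (~~ C (Ordinal htn)).
  by rewrite /coin_factor eq_sym (negbTE nek) /= leqnn andbT geq_max hst hk2'.
have -> : coin_factor t k0 t (C (Ordinal htn)) = 1.
  by rewrite /coin_factor eq_sym (negbTE nek) /= ltnn andbF.
rewrite mul1r mulrCA; congr (_ * (_ * _)); apply: eq_bigr => tau /other_tau htau.
by rewrite coin_factor_succ // htau.
Qed.

Lemma coin_factor_mean t k0 (tau : 'I_n.+1) :
  \sum_b cw tau b * coin_factor t k0 tau b =
  (if (tau == k0 :> nat) && (s.+2 <= k0)%N then k0%:R^-1 else 1) *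
  (if (maxn s.+2 k0.+1 <= tau < t)%N then 1 - tau%:R^-1 else 1).
Proof.
rewrite big_bool /coin_factor /coin_weight /ind /=.
case: ifP => [/andP[/eqP -> _]|_]; last by case: ifP => _ /=; ring.
by rewrite geq_max ltnn andbF /=; ring.
Qed.

(* Slot [j] holds [z_k0] at time [t] with probability [1/(t-1)] whatever [k0]:
   [1/(s+1)] or [1/k0] for the last write, times the telescoping survival
   probability [(s+1)/(t-1)] or [k0/(t-1)]. *)
Lemma prod_coin_factor_mean t k0 : (s.+2 <= t <= n.+1)%N -> (1 <= k0 < t)%N ->
  \prod_(tau < n.+1) \sum_b cw tau b * coin_factor t k0 tau b =
  if (s.+2 <= k0)%N then (t.-1)%:R^-1 else (s.+1)%:R / (t.-1)%:R.
Proof.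
move=> /andP[hst htn] /andP[hk1 hk2].
have hkn : (k0 < n.+1)%N by exact: leq_trans hk2 htn.
have ht1 : (t.-1)%:R != 0 :> R by rewrite pnatr_eq0 -lt0n -ltnS prednK ?(leq_trans _ hst).
rewrite (eq_bigr _ (fun tau _ => coin_factor_mean t k0 tau)) big_split /=.
rewrite (prod_ord_range (fun tau => 1 - tau%:R^-1) _ htn) prod_survival; last first.
  by rewrite geq_max hst hk2 (leq_trans _ (leq_maxl _ _)).
case: (boolP (s.+2 <= k0)%N) => hsk.
  rewrite (maxn_idPr (leqW hsk)) (bigD1 (Ordinal hkn)) //= eqxx /= big1 ?mulr1; last first.
    move=> tau htau; case: eqP => // h; case/eqP: htau; exact: val_inj.
  have hk0 : k0%:R != 0 :> R by rewrite pnatr_eq0 -lt0n.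
  by rewrite /=; field; rewrite hk0 ht1.
have -> : maxn s.+2 k0.+1 = s.+2 by apply/maxn_idPl; rewrite ltnNge.
by rewrite big1 ?mul1r // => tau _; rewrite andbF.
Qed.

Lemma slot_src_uniform d k0 : ((s + d).+2 <= n.+1)%N -> (1 <= k0 < (s + d).+2)%N ->
  \sum_(a : 'I_s.+1) \sum_(C : Coins)
     ((s.+1)%:R^-1 * \prod_(tau < n.+1) cw tau (C tau)) *
     ind (slot_src s a (fun tau => C (inord tau)) (s + d).+2 == k0) = ((s + d).+1)%:R^-1.
Proof.
have -> : (s + d).+2 = (s.+2 + d)%N by rewrite !addSn.
have -> : (s + d).+1 = (s.+2 + d).-1 by rewrite !addSn.
set t := (s.+2 + d)%N => ht hk.
have hst : (s.+2 <= t)%N by rewrite /t leq_addr.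
under eq_bigr do under eq_bigr do rewrite (slot_src_indE _ _ ht hk).
have hsum (a : 'I_s.+1) : \sum_(C : Coins) ((s.+1)%:R^-1 * \prod_(tau < n.+1) cw tau (C tau)) *
    (init_factor k0 a * \prod_(tau < n.+1) coin_factor t k0 tau (C tau)) =
    (s.+1)%:R^-1 * init_factor k0 a *
      \prod_(tau < n.+1) \sum_b cw tau b * coin_factor t k0 tau b.
  rewrite (bigA_distr_bigA (fun (tau : 'I_n.+1) (b : bool) => cw tau b * coin_factor t k0 tau b)) /=.
  by rewrite mulr_sumr; apply: eq_bigr => C _; rewrite big_split /=; ring.
under eq_bigr do rewrite hsum.
rewrite -big_distrl -mulr_sumr /= prod_coin_factor_mean ?hst //.
have hs1 : (s.+1)%:R != 0 :> R by rewrite pnatr_eq0.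
case/andP: hk => hk1 hk2; rewrite /init_factor; case: (boolP (s.+2 <= k0)%N) => hsk.
  by rewrite sumr_const card_ord -mulr_natl mulr1 mulVf ?mul1r // /t addSn.
have hk0 : (k0.-1 < s.+1)%N by rewrite -ltnS prednK // ltnNge.
rewrite (bigD1 (Ordinal hk0)) //= big1 ?addr0 => [|a ha]; last first.
  rewrite /ind; case: eqP => // h; case/eqP: ha; apply: val_inj => /=.
  by rewrite -h.
by rewrite prednK // eqxx /ind mulr1 mulrA mulVf ?mul1r.
Qed.


Definition buf_draw d (w : Om) : {ffun 'I_s -> 'I_(s + d).+1} :=
  [ffun j => inord (buf_src w j (s + d).+2).-1].

Lemma buf_src_bounds d (w : Om) j :
  (1 <= buf_src w j (s + d).+2)%N && (buf_src w j (s + d).+2 < (s + d).+2)%N.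
Proof.
rewrite /buf_src slot_src_gt0 andTb; apply: (slot_src_lt _ (ltn_ord (w.1 j))).
by rewrite !ltnS leq_addr.
Qed.

Lemma buf_draw_indE d (w : Om) k :
  ind (buf_draw d w == k) = \prod_j ind (buf_src w j (s + d).+2 == (k j).+1) :> R.
Proof.
rewrite prod_ind; congr ind.
apply/eqP/forallP => [<- j | h].
  case/andP: (buf_src_bounds d w j) => b1 b2.
  have hb : ((buf_src w j (s + d).+2).-1 < (s + d).+1)%N by rewrite -ltnS prednK.
  by rewrite ffunE inordK // prednK.
apply/ffunP => j; rewrite ffunE (eqP (h j)); apply: val_inj.
by rewrite /= inordK.
Qed.

Lemma buf_draw_prob d k : ((s + d).+2 <= n.+1)%N ->
  \sum_(w : Om) rsx_weight R w * ind (buf_draw d w == k) = ((s + d).+1)%:R^-1 ^+ s.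
Proof.
move=> ht.
have e (w : Om) j : buf_src w j (s + d).+2 =
    slot_src s (w.1 j) (fun tau => [ffun t => w.2 t j] (inord tau)) (s + d).+2.
  by rewrite /buf_src /rsx_coin; congr slot_src; apply: funext => tau; rewrite ffunE.
under eq_bigr do rewrite rsx_weight_slots buf_draw_indE -big_split /=.
under eq_bigr do under eq_bigr do rewrite e.
rewrite (sum_rsx_omega_slots (fun j a C => (s.+1)%:R^-1 * \prod_(tau < n.+1) cw tau (C tau) *
   ind (slot_src s a (fun tau => C (inord tau)) (s + d).+2 == (k j).+1))).
rewrite (eq_bigr (fun _ => ((s + d).+1)%:R^-1)) ?prodr_const ?card_ord // => j _.
by apply: slot_src_uniform; rewrite //= ltnS ltn_ord.
Qed.

Lemma avg_buf_draw d (Phi : {ffun 'I_s -> 'I_(s + d).+1} -> R) :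
  ((s + d).+2 <= n.+1)%N ->
  \sum_(w : Om) rsx_weight R w * Phi (buf_draw d w) = avg Phi.
Proof.
move=> ht.
under eq_bigr do rewrite -(sum_ind_eq (buf_draw d _) Phi) mulr_sumr.
rewrite exchange_big /=.
under eq_bigr do (under eq_bigr do rewrite mulrA; rewrite -big_distrl /= buf_draw_prob //).
by rewrite -mulr_sumr /avg card_ffun !card_ord natrX exprVn.
Qed.
End Distribution.


Lemma rsx_Prob_ge_union (R : realType) n s (E : pred (rsx_omega n s))
    (bad : nat -> pred (rsx_omega n s)) N (p : R) :
  (forall w, (forall d, (d < N)%N -> ~~ bad d w) -> E w) ->
  (forall d, (d < N)%N -> \sum_w rsx_weight R w * ind (bad d w) <= p) ->
  1 - N%:R * p <= rsx_Prob R E.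
Proof.
move=> goodE hbad.
pose nbad w : R := \sum_(d < N) ind (bad d w).
have nbad_ge1 w : ~~ E w -> 1 <= nbad w.
  move=> hE; have [d hd] : exists d : 'I_N, bad d w.
    apply/existsP; apply: contraNT hE => /existsPn hn.
    by apply: goodE => d hd; exact: (hn (Ordinal hd)).
  rewrite /nbad (bigD1 d) //= /ind hd lerDl.
  by apply: sumr_ge0 => *; exact: ind_ge0.
have tot := rsx_total_weight R n s.
rewrite (bigID E) /= in tot.
suff : \sum_(w | ~~ E w) rsx_weight R w <= N%:R * p.
  by move=> h; rewrite /rsx_Prob; lra.
apply: le_trans (_ : \sum_w rsx_weight R w * nbad w <= _).
  rewrite [X in _ <= X](bigID E) /= -[X in X <= _]add0r.
  apply: lerD; first by apply: sumr_ge0 => w _; apply: mulr_ge0;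
    [exact: rsx_weight_ge0| apply: sumr_ge0 => *; exact: ind_ge0].
  apply: ler_sum => w hE; rewrite -[X in X <= _]mulr1.
  by apply: ler_wpM2l; [exact: rsx_weight_ge0| exact: nbad_ge1].
under eq_bigr do rewrite /nbad mulr_sumr.
rewrite exchange_big /= (_ : N%:R * p = \sum_(d < N) p).
  by apply: ler_sum => d _; exact: hbad.
by rewrite sumr_const card_ord mulr_natl.
Qed.

Lemma ler_sum_nat_add (R : realType) (f g : nat -> R) e a b :
  (forall t, (a <= t < b)%N -> f t <= g t + e) ->
  \sum_(a <= t < b) f t <= \sum_(a <= t < b) g t + (b - a)%:R * e.
Proof.
move=> hfg; rewrite mulr_natl -sumr_const_nat -big_split /=.
by apply: ler_sum_nat => t ht; exact: hfg.
Qed.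

(* The minimizer [hstar] of the all-pairs objective witnesses both infima. *)
Lemma regret_le_regret_buf (R : realType) Z H (loss : H -> Z -> Z -> R) n s
    (z : nat -> Z) (w : rsx_omega n s) (hs : nat -> H) (hstar : H) (e : R) :
  (forall h x y, 0 <= loss h x y) ->
  (forall h, \sum_(2 <= t < n.+1) allpairs_pen loss z t hstar <=
             \sum_(2 <= t < n.+1) allpairs_pen loss z t h) ->
  (forall t h, (2 <= t <= n)%N -> `|allpairs_pen loss z t h - bufpen loss z w t h| <= e) ->
  regret loss n z hs <= regret_buf loss z w hs + (n.-1)%:R * (2 * e).
Proof.
move=> loss_ge0 hmin hgap.
have hsub : (n.+1 - 2 = n.-1)%N by rewrite subSS subn1.
have ap_le (f : nat -> H) : \sum_(2 <= t < n.+1) allpairs_pen loss z t (f t) <=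
    \sum_(2 <= t < n.+1) bufpen loss z w t (f t) + (n.-1)%:R * e.
  rewrite -hsub; apply: ler_sum_nat_add => t /andP[ht2 htn].
  by have := hgap t (f t); rewrite ht2 -ltnS htn ler_norml => /(_ isT) /andP[_ ?]; lra.
have bp_le (f : nat -> H) : \sum_(2 <= t < n.+1) bufpen loss z w t (f t) <=
    \sum_(2 <= t < n.+1) allpairs_pen loss z t (f t) + (n.-1)%:R * e.
  rewrite -hsub; apply: ler_sum_nat_add => t /andP[ht2 htn].
  by have := hgap t (f t); rewrite ht2 -ltnS htn ler_norml => /(_ isT) /andP[? _]; lra.
have bp_ge0 h : 0 <= \sum_(2 <= t < n.+1) bufpen loss z w t h.
  apply: sumr_ge0 => t _; rewrite /bufpen mulr_ge0 ?invr_ge0 ?ler0n //.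
  by apply: sumr_ge0 => x _; exact: loss_ge0.
have infA := inf_range_ge hstar hmin.
have infB := inf_range_lb bp_ge0 hstar.
have h1 := ap_le (fun t => hs t.-1).
have h2 := bp_le (fun _ => hstar).
rewrite /regret /regret_buf /=; lra.
Qed.

Section BufferDeviation.
Variables (R : realType) (Z H : Type) (loss : H -> Z -> Z -> R) (B : R).
Variables (n s : nat) (z : nat -> Z) (h0 : H).
Hypotheses (loss_bnd : forall h x y, 0 <= loss h x y <= B) (s_gt0 : (0 < s)%N).

(* Step [t = s + d + 2]: the pool is z_1, ..., z_{t-1} and the query point z_t. *)
Definition pool d : 'I_(s + d).+1 -> Z := fun i => z i.+1.
Arguments pool : clear implicits.
Local Notation query d := (z (s + d).+2).

Lemma allpairs_pen_pool d h :
  allpairs_pen loss z (s + d).+2 h = pool_pen loss (query d) (pool d) h.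
Proof. by rewrite /allpairs_pen /pool_pen big_add1 /= big_mkord. Qed.

Lemma bufpen_sample_pen (w : rsx_omega n s) d h :
  bufpen loss z w (s + d).+2 h = sample_pen loss (query d) (pool d) (buf_draw d w) h.
Proof.
rewrite bufpen_slots; last by rewrite !ltnS leq_addr.
rewrite /sample_pen; congr (_ * _); apply: eq_bigr => j _.
case/andP: (buf_src_bounds d w j) => b1 b2.
have hb : ((buf_src w j (s + d).+2).-1 < (s + d).+1)%N by rewrite -ltnS prednK.
by rewrite /pool ffunE inordK ?prednK.
Qed.

Definition dev_under_at d := dev_under loss (query d) (pool d) (s := s).
Definition dev_over_at d := dev_over loss (query d) (pool d) (s := s).
Arguments dev_under_at : clear implicits.
Arguments dev_over_at : clear implicits.

Definition dev_bad (u : R) d (w : rsx_omega n s) : bool :=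
  ((s + d).+2 <= n)%N &&
  ((u <= dev_under_at d (buf_draw d w) - avg (dev_under_at d)) ||
   (u <= dev_over_at d (buf_draw d w) - avg (dev_over_at d))).

Lemma dev_bad_prob (u Bp : R) d : B <= Bp -> 0 < Bp -> 0 <= u ->
  \sum_w rsx_weight R w * ind (dev_bad u d w) <=
  2 * expR (- (u ^+ 2 * s%:R / (8 * Bp ^+ 2))).
Proof.
move=> hBp Bp_gt0 u_ge0; rewrite /dev_bad.
case: (leqP (s + d).+2 n) => hd /=; last first.
  rewrite big1 => [|w _]; last by rewrite /ind mulr0.
  by rewrite mulr_ge0 ?expR_ge0.
have hdn : ((s + d).+2 <= n.+1)%N by exact: leqW.
have hm : (0 < (s + d).+1)%N by [].
have hc : B / s%:R <= Bp / s%:R by rewrite ler_wpM2r ?invr_ge0 ?ler0n.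
apply: le_trans (ler_sum _ (fun w _ => ler_wpM2l (rsx_weight_ge0 R w) (@ind_orb R _ _))) _.
under eq_bigr do rewrite mulrDr.
rewrite big_split /= mulr_natl mulr2n.
rewrite (avg_buf_draw (fun k => ind (u <= dev_under_at d k - avg (dev_under_at d))) hdn).
rewrite (avg_buf_draw (fun k => ind (u <= dev_over_at d k - avg (dev_over_at d))) hdn).
apply: lerD; apply: mcdiarmid_tail => //.
- apply: bounded_differences_le hc _.
  exact: (dev_under_bounded_differences (query d) (pool d) h0 loss_bnd).
- by move=> k; apply: le_trans hBp; exact: (dev_under_norm (query d) (pool d) h0 loss_bnd).
- apply: bounded_differences_le hc _.
  exact: (dev_over_bounded_differences (query d) (pool d) h0 loss_bnd).
- by move=> k; apply: le_trans hBp; exact: (dev_over_norm (query d) (pool d) h0 loss_bnd).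
Qed.

Lemma penalty_gap_le (u r : R) (w : rsx_omega n s) :
  0 <= 2 * r + u ->
  (forall d, rademacher loss s (pool d) (query d) <= r) ->
  (forall d, (d < n)%N -> ~~ dev_bad u d w) ->
  forall t h, (2 <= t <= n)%N ->
  `|allpairs_pen loss z t h - bufpen loss z w t h| <= 2 * r + u.
Proof.
move=> gap_ge0 hrad good t h /andP[ht2 htn].
have [hts|hts] := leqP t s.+1.
  by rewrite bufpen_allpairs ?subrr ?normr0 // hts andbT ltnW.
have [d et] : exists d, t = (s + d).+2 by exists (t - s.+2)%N; rewrite -!addSn subnKC.
rewrite {t ht2 hts}et in htn *.
have hdn : (d < n)%N by apply: leq_trans htn; rewrite ltnS leqW // leq_addl.
move: (good d hdn); rewrite /dev_bad htn /= negb_or -!ltNge => /andP[hu ho].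
have hm : (0 < (s + d).+1)%N by [].
have hUa := avg_dev_under_le_rademacher (query d) (pool d) h0 loss_bnd hm s_gt0.
have hOa := avg_dev_over_le_rademacher (query d) (pool d) h0 loss_bnd hm s_gt0.
have hU : pool_pen loss (query d) (pool d) h -
    sample_pen loss (query d) (pool d) (buf_draw d w) h <= dev_under_at d (buf_draw d w).
  have hb h' : pool_pen loss (query d) (pool d) h' -
      sample_pen loss (query d) (pool d) (buf_draw d w) h' <= B.
    have := pool_pen_leB (query d) (pool d) loss_bnd hm h'.
    by have := sample_pen_ge0 (query d) (pool d) loss_bnd s_gt0 (buf_draw d w) h'; lra.
  exact: (sup_range_ub hb).
have hO : sample_pen loss (query d) (pool d) (buf_draw d w) h -
    pool_pen loss (query d) (pool d) h <= dev_over_at d (buf_draw d w).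
  have hb h' : sample_pen loss (query d) (pool d) (buf_draw d w) h' -
      pool_pen loss (query d) (pool d) h' <= B.
    have := pool_pen_ge0 (query d) (pool d) loss_bnd hm h'.
    by have := sample_pen_leB (query d) (pool d) loss_bnd s_gt0 (buf_draw d w) h'; lra.
  exact: (sup_range_ub hb).
have := hrad d.
rewrite allpairs_pen_pool bufpen_sample_pen ler_norml.
rewrite /dev_under_at /dev_over_at in hu ho hU hO.
by move=> hr; apply/andP; split; lra.
Qed.

End BufferDeviation.

Lemma chernoff_level (R : realType) (Bp y : R) s : 0 < Bp -> (0 < s)%N -> 1 <= y ->
  expR (- ((Bp * Num.sqrt (8 * ln y / s%:R)) ^+ 2 * s%:R / (8 * Bp ^+ 2))) = y^-1.
Proof.
move=> Bp_gt0 s_gt0 y_ge1.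
have hs : s%:R != 0 :> R by rewrite pnatr_eq0 -lt0n.
rewrite exprMn sqr_sqrtr; last by rewrite !mulr_ge0 ?invr_ge0 ?ler0n ?ln_ge0.
rewrite (_ : _ / _ = ln y); last by field; rewrite hs gt_eqF.
by rewrite expRN lnK // posrE; lra.
Qed.

Lemma sqrtr_sqrM (R : realType) (k x : R) : 0 <= k ->
  Num.sqrt (k ^+ 2 * x) = k * Num.sqrt x.
Proof. by move=> k_ge0; rewrite sqrtrM ?sqr_ge0 // sqrtr_sqr ger0_norm. Qed.

Lemma deviation_le_rate (R : realType) n s (delta c B Cd : R) :
  (2 <= n)%N -> (0 < s)%N -> 0 < delta < 1 -> 0 <= c -> 0 <= B -> 1 <= Cd ->
  2 * (2 * (Cd * (c * Num.sqrt (s%:R^-1))) +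
       (B + 1) * Num.sqrt (8 * ln (2 * n%:R / delta) / s%:R))
  <= Cd * ((8 * c + 8 * (B + 1)) * Num.sqrt (ln (n%:R / delta) / s%:R)).
Proof.
move=> hn hs /andP[hd0 hd1] hc hB hCd.
have hnR : 2 <= n%:R :> R by rewrite (ler_nat R 2 n).
have hsR : 0 < s%:R :> R by rewrite ltr0n.
have hnd : 2 <= n%:R / delta.
  rewrite ler_pdivlMr //; apply: le_trans hnR; nra.
set l := ln (n%:R / delta).
have hl2 : ln 2 <= l by rewrite /l ler_ln ?posrE //; lra.
have hl4 := ln2_ge_quarter R.
have e2 : ln (2 * n%:R / delta) = ln 2 + l.
  by rewrite -mulrA lnM ?posrE //; lra.
set q := Num.sqrt (l / s%:R).
have hq : 0 <= q by exact: sqrtr_ge0.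
have hls : 0 <= l / s%:R by rewrite divr_ge0 //; lra.
(* [n / delta >= 2] gives [ln 2 <= 4 l], which absorbs both [1 / s] and the
   [ln 2] in [ln (2 n / delta)] into multiples of [l / s]. *)
have ha : Num.sqrt (s%:R^-1) <= 2 * q.
  rewrite /q -sqrtr_sqrM // ler_sqrt; last by rewrite mulr_ge0 ?sqr_ge0.
  by rewrite mulrA -[X in X <= _]mul1r ler_wpM2r ?invr_ge0; lra.
have hb : Num.sqrt (8 * ln (2 * n%:R / delta) / s%:R) <= 4 * q.
  rewrite /q -sqrtr_sqrM // ler_sqrt; last by rewrite mulr_ge0 ?sqr_ge0.
  by rewrite e2 mulrA ler_wpM2r ?invr_ge0; lra.
set a := Num.sqrt (s%:R^-1) in ha *.
set b := Num.sqrt _ in hb *.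
have h1 : Cd * (c * a) <= Cd * (c * (2 * q)).
  by apply: ler_wpM2l; [lra|apply: ler_wpM2l].
have h2 : (B + 1) * b <= (B + 1) * (4 * q) by apply: ler_wpM2l; lra.
have h3 : (B + 1) * q <= Cd * ((B + 1) * q).
  by rewrite -[X in X <= _]mul1r ler_wpM2r //; apply: mulr_ge0 => //; lra.
have h4 : 0 <= Cd * (c * q) by apply: mulr_ge0; [lra|exact: mulr_ge0].
nra.
Qed.

Theorem lemma22 (R : realType) (B c : R) :
  0 <= B -> 0 <= c ->
  exists K : R, 0 < K /\
  forall (Z H : Type) (loss : H -> Z -> Z -> R) (Cd : R),
    1 <= Cd ->
    (forall h x y, 0 <= loss h x y <= B) ->
    (forall (s m : nat) (S : 'I_m -> Z) (x : Z), (0 < s)%N -> (0 < m)%N ->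
       rademacher loss s S x <= Cd * (c * Num.sqrt (s%:R^-1))) ->
    forall (n s : nat) (delta : R) (z : nat -> Z)
           (hs : rsx_omega n s -> nat -> H),
      (2 <= n)%N -> (0 < s)%N -> 0 < delta < 1 ->
      (exists hstar : H, forall h : H,
         (\sum_(2 <= t < n.+1) allpairs_pen loss z t hstar)
           <= (\sum_(2 <= t < n.+1) allpairs_pen loss z t h)) ->
      rsx_Prob R [pred w : rsx_omega n s |
        regret loss n z (hs w) <=
        regret_buf loss z w (hs w)
          + Cd * (n.-1)%:R * (K * Num.sqrt (ln (n%:R / delta) / s%:R))]
      >= 1 - delta.
Proof.
move=> B_ge0 c_ge0; exists (8 * c + 8 * (B + 1)); split; first lra.
move=> Z H loss Cd Cd_ge1 loss_bnd hrad n s delta z hs n_ge2 s_gt0 hdelta [hstar hmin].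
have [delta_gt0 delta_lt1] := andP hdelta.
have n_ge2R : 2 <= n%:R :> R by rewrite (ler_nat R 2 n).
have n_gt0 : 0 < n%:R :> R by lra.
set r := Cd * (c * Num.sqrt (s%:R^-1)).
(* [B + 1] keeps the McDiarmid scale positive when [B = 0]. *)
set u := (B + 1) * Num.sqrt (8 * ln (2 * n%:R / delta) / s%:R).
have r_ge0 : 0 <= r by rewrite !mulr_ge0 ?sqrtr_ge0 //; lra.
have u_ge0 : 0 <= u by rewrite mulr_ge0 ?sqrtr_ge0 //; lra.
apply: le_trans (rsx_Prob_ge_union (bad := dev_bad loss z u) (N := n)
  (p := delta / n%:R) _ _); first by rewrite mulrC divfK ?gt_eqF.
- move=> w good; rewrite inE.
  have gap := penalty_gap_le hstar loss_bnd s_gt0 (r := r) _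
    (fun d => hrad _ _ _ _ s_gt0 (ltn0Sn _)) good.
  apply: le_trans (regret_le_regret_buf (hs w) _ hmin (gap _)) _.
  + by move=> h x y; case/andP: (loss_bnd h x y).
  + lra.
  rewrite lerD2l mulrAC [_ * n.-1%:R]mulrC ler_wpM2l ?ler0n //.
  exact: deviation_le_rate.
- have hB1 : B <= B + 1 by lra.
  move=> d _; apply: le_trans (dev_bad_prob n z hstar loss_bnd s_gt0 d hB1 _ u_ge0) _.
    lra.
  rewrite chernoff_level ?invf_div; [|lra|done|].
  + have -> : 2 * (delta / (2 * n%:R)) = delta / n%:R by field; rewrite gt_eqF.
    exact: lexx.
  by rewrite ler_pdivlMr //; lra.
Qed.
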